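(* Let $h,n\geq2$ and $V\leq S_h$. Then $V\times\{id\}$ is a symmetry group with respect to $(h,n)$ if and only if it is an anonymity group with respect to $(h,n)$. In particular, every anonymity group with respect to $(h,n)$ is a symmetry group with respect to $(h,n)$.
   Context: Permutations compose as $(\sigma\tau)(x)=\sigma(\tau(x))$. Let $G=S_h\times S_n$ and $\mathcal{P}=(S_n)^h$ (preference profiles), with $G$ acting by $(p^{(\varphi,\psi)})_i=\psi\,p_{\varphi^{-1}(i)}$. A social preference function (SPF) is any $F:\mathcal{P}\to S_n$. Its symmetry group is $G(F)=\{(\varphi,\psi)\in G: F(p^{(\varphi,\psi)})=\psi F(p)\ \forall p\}$ and its anonymity group is $G_1(F)=G(F)\cap(S_h\times\{id\})$. $U\leq G$ is a symmetry group with respect to $(h,n)$ if $U=G(F)$ for some SPF $F$; $U\leq S_h\times\{id\}$ is an anonymity group with respect to $(h,n)$ if $U=G_1(F)$ for some SPF $F$. *)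

From mathcomp Require Import all_boot all_fingroup.
Set Implicit Arguments. Unset Strict Implicit. Unset Printing Implicit Defensive.

Local Open Scope group_scope.

(* Composition in the paper's convention: (comp s t) x = s (t x).
   In MathComp, (s * t) x = t (s x), hence comp s t := t * s. *)
Definition comp (T : finType) (s t : {perm T}) : {perm T} := t * s.

Definition profile (h n : nat) := {ffun 'I_h -> {perm 'I_n}}.

Definition Gelt (h n : nat) := ({perm 'I_h} * {perm 'I_n})%type.

Definition act (h n : nat) (g : Gelt h n) (p : profile h n) : profile h n :=
  [ffun i => comp g.2 (p (g.1^-1 i))].

Definition symgroup (h n : nat) (F : profile h n -> {perm 'I_n}) : {set Gelt h n} :=
  [set g : Gelt h n | [forall p : profile h n, F (act g p) == comp g.2 (F p)]].

Definition Sh_id (h n : nat) : {set Gelt h n} :=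
  setX [set: {perm 'I_h}] [set 1 : {perm 'I_n}].

Definition anongroup (h n : nat) (F : profile h n -> {perm 'I_n}) : {set Gelt h n} :=
  symgroup F :&: Sh_id h n.

Definition is_symmetry_group (h n : nat) (U : {set Gelt h n}) : Prop :=
  exists F : profile h n -> {perm 'I_n}, symgroup F = U.

Definition is_anonymity_group (h n : nat) (U : {set Gelt h n}) : Prop :=
  exists F : profile h n -> {perm 'I_n}, anongroup F = U.

(* Unanimous profiles are fixed by every anonymity [(phi, id)] and are moved
   to unanimous profiles by every [(phi, psi)].  Redefining an SPF [F] to be
   [id] on unanimous profiles therefore keeps the anonymities of [F] and
   kills every other symmetry: at the unanimous profile [(id, ..., id)] a
   symmetry [(phi, psi)] of the modified SPF gives [id = psi \o id].  So every
   anonymity group is a symmetry group, and conversely a symmetry group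
   contained in [S_h x {id}] is its own anonymity group. *)
From Pilot Require Import Defs.
From mathcomp Require Import all_boot all_fingroup.
Set Implicit Arguments. Unset Strict Implicit. Unset Printing Implicit Defensive.

Local Open Scope group_scope.

Section UnanimousProfiles.

Variables h n : nat.
Implicit Types (g : Gelt h n) (p : profile h n) (F : profile h n -> {perm 'I_n}).

Definition unanimous p : bool := [exists s : {perm 'I_n}, p == [ffun => s]].

Definition id_on_unanimous F p : {perm 'I_n} := if unanimous p then 1 else F p.

Lemma unanimous_const (s : {perm 'I_n}) : unanimous [ffun => s].
Proof. by apply/existsP; exists s. Qed.

Lemma act_const g (s : {perm 'I_n}) : Defs.act g [ffun => s] = [ffun => Defs.comp g.2 s].
Proof. by apply/ffunP=> i; rewrite !ffunE. Qed.

Lemma unanimous_act g p : unanimous (Defs.act g p) = unanimous p.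
Proof.
apply/existsP/existsP=> [[t /eqP Et] | [s /eqP ->]]; last first.
  by exists (Defs.comp g.2 s); rewrite act_const.
exists (Defs.comp g.2^-1 t); apply/eqP/ffunP=> i.
have := congr1 (fun q : profile h n => q (g.1 i)) Et.
by rewrite /= !ffunE permK /Defs.comp => <-; rewrite mulgK.
Qed.

Lemma act_unanimous_anonymous g p : g.2 = 1 -> unanimous p -> Defs.act g p = p.
Proof.
move=> g2_id /existsP[s /eqP ->].
by rewrite act_const g2_id /Defs.comp mulg1.
Qed.

Lemma symgroup_id_on_unanimous F : symgroup (id_on_unanimous F) = anongroup F.
Proof.
apply/setP=> g; rewrite /anongroup /Sh_id !inE /id_on_unanimous /=.
apply/forallP/andP=> [sym_g | [/forallP sym_g /eqP g2_id] p].
  have g2_id : g.2 = 1.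
    have := sym_g [ffun => 1].
    by rewrite act_const !unanimous_const /Defs.comp mul1g eq_sym => /eqP.
  split; last by rewrite g2_id.
  apply/forallP=> p; have := sym_g p; rewrite unanimous_act.
  case: ifP => [/(act_unanimous_anonymous g2_id) -> _ | _ //].
  by rewrite g2_id /Defs.comp mulg1.
rewrite unanimous_act; case: ifP => _; last exact: sym_g.
by rewrite g2_id /Defs.comp mulg1.
Qed.

Lemma anongroup_eq_symgroup F : symgroup F \subset Sh_id h n -> anongroup F = symgroup F.
Proof. by move/setIidPl. Qed.

Lemma anonymity_group_is_symmetry_group (U : {set Gelt h n}) :
  is_anonymity_group U -> is_symmetry_group U.
Proof. by case=> F <-; exists (id_on_unanimous F); apply: symgroup_id_on_unanimous. Qed.

End UnanimousProfiles.

Theorem mainTheorem6 (h n : nat) (hh : 2 <= h) (hn : 2 <= n) :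
  (forall V : {group {perm 'I_h}},
     is_symmetry_group (setX (V : {set {perm 'I_h}}) [set 1%g : {perm 'I_n}])
     <-> is_anonymity_group (setX (V : {set {perm 'I_h}}) [set 1%g : {perm 'I_n}]))
  /\ (forall U : {set Gelt h n}, is_anonymity_group U -> is_symmetry_group U).
Proof.
split=> [V|]; last exact: anonymity_group_is_symmetry_group.
split; last exact: anonymity_group_is_symmetry_group.
case=> F symF; exists F; rewrite anongroup_eq_symgroup // symF.
by rewrite setXS ?subsetT.
Qed.
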